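(* Consider the binary model with unknown prior $\mu^*\in(0,1)$ and unknown bias $\alpha^*$, known cutoff $\hat q$ with $0<\mu^*<\hat q<1$, and assume $\alpha^*\ge\frac{\hat q-\mu^*}{1-\mu^*}$, so that $m^*\in[0,1]$. Then for every $T\ge4$, the policy SEJ satisfies $$\mathrm{Reg}_T\le\Big(\frac{1-\mu^*}{\mu^*}+1\Big)\big(2+\lceil\log_2\log_2T\rceil\big)+1=O(\log\log T).$$
   Context: Binary model: $\Omega=A=\{0,1\}$, sender utility $u_S(a,\omega)=\mathbf 1\{a=1\}$. Both the prior $\mu^*=\Pr(\omega=1)$ and the bias $\alpha^*\in(0,1]$ are fixed across rounds and unknown to the sender. After a signal with Bayesian posterior $\nu=\Pr(\omega=1\mid s)$, the receiver takes action $1$ iff $(1-\alpha^* )\mu^*+\alpha^*\nu\ge\hat q$ (ties in favor of action $1$). Signaling family. For $m\in[0,1]$, the scheme $\pi_m$ sends signal High with probability $1$ in state $1$ and with probability $m$ in state $0$, and sends Low otherwise. Define $m^*$ as the solution of $$(1-\alpha^* )\mu^*+\alpha^*\frac{\mu^*}{\mu^*+(1-\mu^* )m^*}=\hat q,$$ so that High under $\pi_m$ induces action $1$ iff $m\le m^*$. Benchmark and regret. The full-information benchmark value per round is $V^*=\mu^*+(1-\mu^* )m^*$, the optimal probability of inducing action $1$ when $(\mu^*,\alpha^* )$ are known. The regret is $\mathrm{Reg}_T=TV^*-\sum_t\mathbb E[\Pr(\text{action }1\text{ in round }t\mid\text{history})]$. Policy SEJ. Initialize $[a,b]=[0,1]$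 and $\varepsilon=1/2$. While $b-a>1/T$ and rounds remain, run a phase: 1. Set $m=m_{\rm prev}=a$. 2. While $m\le b$ and rounds remain, play $\pi_m$ for one round. If the signal is Low, continue. If the signal is High and the receiver takes action $1$, set $m_{\rm prev}\gets m$ and $m\gets m+\varepsilon$. If the signal is High and the receiver takes action $0$, set $[a,b]\gets[m_{\rm prev},m]$, $\varepsilon\gets\varepsilon^2$, and end the phase. 3. If the inner loop ended because $m>b$, set $[a,b]\gets[m_{\rm prev},b]$ and $\varepsilon\gets\varepsilon^2$. Then play $\pi_a$ in all remaining rounds. *)

From Stdlib Require Import Reals Lra Lia ZArith.
Open Scope R_scope.

Definition log2R (x : R) : R := ln x / ln 2.
(* Int_part is the floor; ceiling x = - floor (- x) *)
Definition Rceil (x : R) : Z := (- Int_part (- x))%Z.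

Definition receiver_act (mu alpha qhat nu : R) : bool :=
  if Rle_dec qhat ((1 - alpha) * mu + alpha * nu) then true else false.

(* Scheme pi_m: High w.p. 1 in state 1, w.p. m in state 0. *)
Definition prob_high (mu m : R) : R := mu + (1 - mu) * m.
Definition post_high (mu m : R) : R := mu / (mu + (1 - mu) * m).
(* Low is never sent in state 1, so its posterior is 0. *)
Definition post_low : R := 0.

Definition Vstar (mu mstar : R) : R := mu + (1 - mu) * mstar.

(* State of policy SEJ between rounds:
   interval [a,b], step eps, current m, m_prev, and whether the
   exploration is over (then pi_a is played forever). *)
Record sej_state := mkS {
  s_a : R; s_b : R; s_eps : R; s_m : R; s_mprev : R; s_final : bool }.

(* Start of a phase (outer while-test b - a > 1/T). *)
Definition start_phase (T : nat) (a b eps : R) : sej_state :=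
  if Rlt_dec (/ INR T) (b - a) then mkS a b eps a a false
  else mkS a b eps a a true.

Definition sej_init (T : nat) : sej_state := start_phase T 0 1 (1/2).

Definition played (s : sej_state) : R :=
  if s_final s then s_a s else s_m s.

Definition sej_high (T : nat) (s : sej_state) (act : bool) : sej_state :=
  if s_final s then s else
  if act then
    let m' := s_m s + s_eps s in
    if Rle_dec m' (s_b s) then
      mkS (s_a s) (s_b s) (s_eps s) m' (s_m s) false
    else (* inner loop ends because m > b; here m_prev = old m *)
      start_phase T (s_m s) (s_b s) (s_eps s ^ 2)
  else start_phase T (s_mprev s) (s_m s) (s_eps s ^ 2).

(* Expected number of rounds (among the next n) with action 1, i.e.
   sum over rounds of E[Pr(action 1 in round | history)], starting
   from state s; the randomness is the signal (High w.p. prob_high). *)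
Fixpoint sej_value (mu alpha qhat : R) (T n : nat) (s : sej_state) : R :=
  match n with
  | O => 0
  | S n' =>
      let m := played s in
      let pH := prob_high mu m in
      let aH := receiver_act mu alpha qhat (post_high mu m) in
      let aL := receiver_act mu alpha qhat post_low in
      pH * (if aH then 1 else 0) + (1 - pH) * (if aL then 1 else 0)
      + pH * sej_value mu alpha qhat T n' (sej_high T s aH)
      + (1 - pH) * sej_value mu alpha qhat T n' s
  end.

Definition sej_regret (mu alpha qhat mstar : R) (T : nat) : R :=
  INR T * Vstar mu mstar - sej_value mu alpha qhat T T (sej_init T).

(* A potential argument.  Within a phase with step [e], an exploration round at [m <= mstar] loses
   [(1 - mu) (mstar - m)], which is at most [(1 - mu) / mu] times the probability of High times
   [mstar - m]; each High moves [m] up by [e], so these losses telescope into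
   [walk_cost e (mstar - m)].  A phase starts on an interval of width at most the previous step
   [e] and uses step [e ^ 2], so its walk costs [O(1)]; the overshooting round that ends it costs
   one more.  Steps are [(1/2) ^ 2 ^ k], so at most [ceil (log2 (log2 T))] phases start before the
   interval is shorter than [1 / T], after which [pi_a] loses at most [(1 - mu) / T] per round. *)

From Stdlib Require Import Reals Lra Lia ZArith.
Open Scope R_scope.

Definition eps_sched (k : nat) : R := (/ 2) ^ (2 ^ k).

Lemma eps_sched_S k : eps_sched (S k) = eps_sched k ^ 2.
Proof. unfold eps_sched. rewrite <- pow_mult. f_equal. simpl. lia. Qed.

Lemma eps_sched_bounds k : 0 < eps_sched k <= / 2.
Proof.
  induction k as [|k IH].
  - unfold eps_sched. simpl. lra.
  - rewrite eps_sched_S. simpl. nra.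
Qed.

Definition ceil_loglog (x : R) : R := IZR (Rceil (log2R (log2R x))).

Lemma Rceil_gt_INR x n : INR n < x -> INR (S n) <= IZR (Rceil x).
Proof.
  intros Hn. unfold Rceil. rewrite opp_IZR.
  destruct (base_Int_part (- x)) as [Hfl _].
  rewrite S_INR, INR_IZR_INZ in *.
  assert (Z.of_nat n < - Int_part (- x))%Z by (apply lt_IZR; rewrite opp_IZR; lra).
  rewrite <- opp_IZR, <- plus_IZR. apply IZR_le. lia.
Qed.

Lemma log2R_pow2 n : log2R (2 ^ n) = INR n.
Proof.
  unfold log2R. rewrite ln_pow by lra. field.
  pose proof ln_lt_2. lra.
Qed.

Lemma log2R_lt x y : 0 < x -> x < y -> log2R x < log2R y.
Proof.
  intros Hx Hxy. unfold log2R, Rdiv. pose proof ln_lt_2.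
  apply Rmult_lt_compat_r.
  - apply Rinv_0_lt_compat. lra.
  - apply ln_increasing; lra.
Qed.

(* A phase with step [eps_sched k] is only entered when [/ x < eps_sched k], i.e. [x > 2 ^ 2 ^ k];
   this caps the number of phases at [log2 log2 x]. *)
Lemma phase_index_bound x k : 0 < x -> / x < eps_sched k -> INR (S k) <= ceil_loglog x.
Proof.
  intros Hx Hk. unfold eps_sched in Hk. rewrite pow_inv in Hk.
  assert (Hp : 0 < 2 ^ (2 ^ k)) by (apply pow_lt; lra).
  assert (Hbig : 2 ^ (2 ^ k) < x).
  { rewrite <- (Rinv_inv x), <- (Rinv_inv (2 ^ 2 ^ k)).
    apply Rinv_lt_contravar; [|exact Hk].
    apply Rmult_lt_0_compat; apply Rinv_0_lt_compat; lra. }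
  apply Rceil_gt_INR.
  rewrite <- log2R_pow2. apply log2R_lt; [apply pow_lt; lra|].
  replace (2 ^ k) with (INR (2 ^ k)) by (rewrite pow_INR; reflexivity).
  rewrite <- log2R_pow2.
  apply log2R_lt; assumption.
Qed.

Lemma ceil_loglog_ge1 x : 2 < x -> 1 <= ceil_loglog x.
Proof.
  intros Hx. apply (phase_index_bound x 0); [lra|].
  unfold eps_sched. simpl. rewrite Rmult_1_r. apply Rinv_lt_contravar; lra.
Qed.

(* Dominates the sum [d + (d - e) + (d - 2 e) + ...] of the gaps left while walking up to a target
   at distance [d] with step [e]; the telescoping identity [walk_cost_step] is all that is used. *)
Definition walk_cost (e d : R) : R := d * d / (2 * e) + d / 2 + e / 8.

Lemma walk_cost_step e d : 0 < e -> walk_cost e d = d + walk_cost e (d - e).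
Proof. intros He. unfold walk_cost. field. lra. Qed.

Lemma walk_cost_ge e d : 0 < e -> d <= walk_cost e d.
Proof.
  intros He.
  assert (Hsq : walk_cost e d - d = (d - e / 2) * (d - e / 2) / (2 * e))
    by (unfold walk_cost; field; lra).
  assert (0 <= (d - e / 2) * (d - e / 2) / (2 * e)).
  { apply Rmult_le_pos; [apply Rle_0_sqr|]. left. apply Rinv_0_lt_compat. lra. }
  lra.
Qed.

Lemma walk_cost_squared_step e d : 0 < e <= / 2 -> 0 <= d <= e -> walk_cost (e ^ 2) d <= 1.
Proof.
  intros He Hd. unfold walk_cost.
  assert (d * d / (2 * e ^ 2) <= / 2).
  { apply (Rmult_le_reg_r (2 * e ^ 2)); [nra|].
    unfold Rdiv. rewrite Rmult_assoc, Rinv_l; nra. }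
  nra.
Qed.

Lemma walk_cost_half d : 0 <= d <= 1 -> walk_cost (/ 2) d <= 2.
Proof.
  intros Hd. unfold walk_cost.
  replace (d * d / (2 * / 2)) with (d * d) by field.
  nra.
Qed.

Section SEJ.

Variables (mu alpha qhat mstar : R) (T : nat).
Hypothesis mu_bounds : 0 < mu < 1.
Hypothesis alpha_bounds : 0 < alpha <= 1.
Hypothesis qhat_bounds : mu < qhat < 1.
Hypothesis alpha_large : alpha >= (qhat - mu) / (1 - mu).
Hypothesis mstar_def : (1 - alpha) * mu + alpha * (mu / (mu + (1 - mu) * mstar)) = qhat.
Hypothesis T_ge4 : (4 <= T)%nat.

(* [mstar_def] forces [mu + (1 - mu) * mstar = alpha * mu / (qhat - (1 - alpha) * mu)], which is
   at most [1] since [mu < qhat] and at least [mu] by [alpha_large]. *)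
Lemma mstar_bounds : 0 <= mstar <= 1.
Proof.
  set (D := mu + (1 - mu) * mstar) in *.
  assert (HD0 : D <> 0).
  { intros E. rewrite E in mstar_def. unfold Rdiv in mstar_def. rewrite Rinv_0 in mstar_def. nra. }
  assert (Hgap : 0 < qhat - (1 - alpha) * mu) by nra.
  assert (HD : D * (qhat - (1 - alpha) * mu) = alpha * mu).
  { rewrite <- mstar_def. field. exact HD0. }
  assert (Halpha : qhat - mu <= alpha * (1 - mu)).
  { apply Rge_le in alpha_large.
    apply (Rmult_le_compat_r (1 - mu)) in alpha_large; [|lra].
    unfold Rdiv in alpha_large. rewrite Rmult_assoc, Rinv_l in alpha_large; lra. }
  assert (mu <= D <= 1) by (split; nra).
  unfold D in *. split; nra.
Qed.

Lemma receiver_ignores_low : receiver_act mu alpha qhat post_low = false.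
Proof.
  unfold receiver_act, post_low.
  destruct (Rle_dec _ _); [nra | reflexivity].
Qed.

Lemma receiver_follows_high m : 0 <= m ->
  receiver_act mu alpha qhat (post_high mu m) = if Rle_dec m mstar then true else false.
Proof.
  intros Hm. pose proof mstar_bounds as Hms.
  unfold receiver_act, post_high.
  set (Dm := mu + (1 - mu) * m). set (Ds := mu + (1 - mu) * mstar) in *.
  assert (HDm : 0 < Dm) by (unfold Dm; nra).
  assert (HDs : 0 < Ds) by (unfold Ds; nra).
  assert (Hgap : ((1 - alpha) * mu + alpha * (mu / Dm) - qhat) * (Dm * Ds)
                 = alpha * mu * (1 - mu) * (mstar - m)).
  { rewrite <- mstar_def. transitivity (alpha * mu * (Ds - Dm)).
    - field. lra.
    - unfold Dm, Ds. ring. }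
  assert (0 < alpha * mu * (1 - mu)) by (repeat apply Rmult_lt_0_compat; lra).
  assert (0 < Dm * Ds) by nra.
  destruct (Rle_dec m mstar); destruct (Rle_dec qhat _); auto; exfalso; nra.
Qed.

Lemma INR_T_ge4 : 4 <= INR T.
Proof. replace 4 with (INR 4) by (simpl; lra). apply le_INR. exact T_ge4. Qed.

Definition loss_weight : R := (1 - mu) / mu.
Definition phase_weight : R := loss_weight + 1.
Definition phases_left (k : nat) : R := ceil_loglog (INR T) - INR k.

Lemma loss_weight_nonneg : 0 <= loss_weight.
Proof.
  unfold loss_weight, Rdiv. apply Rmult_le_pos; [lra|].
  left. apply Rinv_0_lt_compat. lra.
Qed.

(* [k] counts the phases started so far. *)
Definition sej_inv (s : sej_state) (k : nat) : Prop :=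
  if s_final s then 0 <= s_a s <= mstar /\ mstar - s_a s <= / INR T
  else 0 <= s_mprev s <= mstar /\ s_mprev s <= s_m s <= s_mprev s + s_eps s /\
       s_m s <= s_b s /\ mstar <= s_b s <= 1 /\
       s_eps s = eps_sched k /\ INR k <= ceil_loglog (INR T).

(* While [m <= mstar] every round loses [(1 - mu) (mstar - m)] and the walk still to come is paid by
   [walk_cost]; the [1] pays for the overshooting round that ends the phase, and [phase_weight]
   per remaining phase pays for the potential of the next phase. *)
Definition phase_potential (s : sej_state) : R :=
  if Rle_dec (s_m s) mstar then loss_weight * walk_cost (s_eps s) (mstar - s_m s) + 1 else 1.

Definition potential (s : sej_state) (k : nat) : R :=
  if s_final s then 0 else phase_potential s + phase_weight * phases_left k.

Lemma phase_potential_ge s : 0 < s_eps s -> s_m s <= mstar ->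
  loss_weight * (mstar - s_m s) + 1 <= phase_potential s.
Proof.
  intros He Hm. unfold phase_potential.
  destruct (Rle_dec (s_m s) mstar) as [_|]; [|contradiction].
  pose proof (walk_cost_ge _ (mstar - s_m s) He).
  pose proof loss_weight_nonneg. nra.
Qed.

Lemma phase_potential_ge1 s : 0 < s_eps s -> 1 <= phase_potential s.
Proof.
  intros He. destruct (Rle_dec (s_m s) mstar) as [Hm|Hm].
  - pose proof (phase_potential_ge s He Hm). pose proof loss_weight_nonneg. nra.
  - unfold phase_potential. destruct (Rle_dec _ _); [contradiction | lra].
Qed.

Lemma phase_potential_advance s s' :
  0 < s_eps s -> s_eps s' = s_eps s -> s_m s' = s_m s + s_eps s -> s_m s <= mstar ->
  loss_weight * (mstar - s_m s) <= phase_potential s - phase_potential s'.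
Proof.
  intros He He' Hm' Hm. pose proof (phase_potential_ge s He Hm) as Hge.
  unfold phase_potential at 2. rewrite He', Hm'.
  destruct (Rle_dec (s_m s + s_eps s) mstar) as [Hle|]; [|lra].
  unfold phase_potential. destruct (Rle_dec (s_m s) mstar) as [_|]; [|contradiction].
  rewrite (walk_cost_step (s_eps s) (mstar - s_m s)) by exact He.
  replace (mstar - s_m s - s_eps s) with (mstar - (s_m s + s_eps s)) by ring.
  lra.
Qed.

Lemma start_phase_inv a b k :
  0 <= a <= mstar -> mstar <= b <= 1 -> b - a <= eps_sched k ->
  sej_inv (start_phase T a b (eps_sched k ^ 2)) (S k).
Proof.
  intros Ha Hb Hw. pose proof INR_T_ge4. pose proof (eps_sched_bounds k).
  unfold start_phase. destruct (Rlt_dec (/ INR T) (b - a)) as [Hl|Hl]; unfold sej_inv; simpl.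
  - repeat split; try lra.
    + simpl; nra.
    + symmetry. apply eps_sched_S.
    + apply phase_index_bound; lra.
  - lra.
Qed.

Lemma potential_start_phase a b k :
  0 <= a <= mstar -> mstar - a <= eps_sched k -> 0 <= phases_left k ->
  potential (start_phase T a b (eps_sched k ^ 2)) (S k) <= phase_weight * phases_left k.
Proof.
  intros Ha Hw Hk. pose proof (eps_sched_bounds k). pose proof loss_weight_nonneg.
  assert (Hc : 0 <= phase_weight) by (unfold phase_weight; lra).
  unfold start_phase. destruct (Rlt_dec _ _); unfold potential; cbn [s_final]; [|nra].
  unfold phase_potential, phases_left in *; cbn [s_m s_eps].
  destruct (Rle_dec a mstar) as [_|]; [|lra].
  pose proof (walk_cost_squared_step (eps_sched k) (mstar - a) ltac:(lra) ltac:(lra)).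
  rewrite S_INR. unfold phase_weight in *. nra.
Qed.

Lemma potential_nonneg s k : sej_inv s k -> 0 <= potential s k.
Proof.
  unfold sej_inv, potential. destruct (s_final s); [lra|].
  intros (_ & _ & _ & _ & He & Hk).
  pose proof (eps_sched_bounds k).
  pose proof (phase_potential_ge1 s ltac:(lra)). pose proof loss_weight_nonneg.
  unfold phases_left, phase_weight. nra.
Qed.

Lemma upward_drift m D : 0 <= m <= mstar -> loss_weight * (mstar - m) <= D ->
  Vstar mu mstar - prob_high mu m <= prob_high mu m * D.
Proof.
  intros Hm HD. pose proof loss_weight_nonneg.
  assert (Hw : loss_weight * mu = 1 - mu) by (unfold loss_weight; field; lra).
  assert (Hloss : 0 <= loss_weight * (mstar - m)) by (apply Rmult_le_pos; lra).
  assert (HpH : mu <= prob_high mu m) by (unfold prob_high; nra).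
  assert (prob_high mu m * (loss_weight * (mstar - m)) <= prob_high mu m * D)
    by (apply Rmult_le_compat_l; lra).
  unfold Vstar. unfold prob_high in *. nra.
Qed.

Lemma overshoot_drift m D : mstar < m -> 1 <= D -> Vstar mu mstar <= prob_high mu m * D.
Proof.
  intros Hm HD. pose proof mstar_bounds.
  assert (HpH : Vstar mu mstar <= prob_high mu m) by (unfold Vstar, prob_high; nra).
  assert (prob_high mu m * 1 <= prob_high mu m * D)
    by (apply Rmult_le_compat_l; unfold Vstar, prob_high in *; nra).
  lra.
Qed.

Notation act_on m := (receiver_act mu alpha qhat (post_high mu m)).

Lemma sej_round_drift s k : sej_inv s k ->
  exists k', sej_inv (sej_high T s (act_on (played s))) k' /\
    Vstar mu mstar - prob_high mu (played s) * (if act_on (played s) then 1 else 0)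
    <= prob_high mu (played s) * (potential s k - potential (sej_high T s (act_on (played s))) k')
       + (1 - mu) / INR T.
Proof.
  intros HI. pose proof INR_T_ge4.
  assert (Hdelta : 0 <= (1 - mu) / INR T).
  { unfold Rdiv. apply Rmult_le_pos; [lra|]. left. apply Rinv_0_lt_compat. lra. }
  destruct s as [a b e m mp []]; unfold sej_inv in HI; cbn [s_final s_a s_b s_eps s_m s_mprev] in HI;
    unfold played, sej_high; cbn [s_final s_a s_b s_eps s_m s_mprev].
  - exists k. destruct HI as [Ha Hw].
    rewrite (receiver_follows_high a) by lra.
    destruct (Rle_dec a mstar) as [_|]; [|lra].
    split; [unfold sej_inv; cbn; lra|].
    assert ((1 - mu) * (mstar - a) <= (1 - mu) * / INR T) by (apply Rmult_le_compat_l; lra).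
    unfold Vstar, prob_high, Rdiv. lra.
  - destruct HI as (Hmp & Hm & Hmb & Hb & He & Hk). subst e.
    pose proof (eps_sched_bounds k).
    assert (Hleft : 0 <= phases_left k) by (unfold phases_left; lra).
    set (s := mkS a b (eps_sched k) m mp false).
    assert (Hpot : potential s k = phase_potential s + phase_weight * phases_left k) by reflexivity.
    rewrite (receiver_follows_high m) by lra.
    destruct (Rle_dec m mstar) as [Hle|Hgt]; [destruct (Rle_dec (m + eps_sched k) b)|].
    + set (s' := mkS a b (eps_sched k) (m + eps_sched k) m false).
      exists k. split; [unfold sej_inv; cbn; repeat split; lra|].
      enough (Vstar mu mstar - prob_high mu m <= prob_high mu m * (potential s k - potential s' k))
        by lra.
      apply upward_drift; [lra|].
      pose proof (phase_potential_advance s s' ltac:(cbn; lra) eq_refl eq_refl Hle).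
      change (potential s' k) with (phase_potential s' + phase_weight * phases_left k).
      change (s_m s) with m in *. lra.
    + exists (S k). split; [apply start_phase_inv; lra|].
      enough (Vstar mu mstar - prob_high mu m
              <= prob_high mu m * (potential s k - potential (start_phase T m b (eps_sched k ^ 2)) (S k)))
        by lra.
      apply upward_drift; [lra|].
      pose proof (potential_start_phase m b k ltac:(lra) ltac:(lra) Hleft).
      pose proof (phase_potential_ge s ltac:(cbn; lra) Hle). change (s_m s) with m in *. lra.
    + exists (S k). split; [apply start_phase_inv; lra|].
      enough (Vstar mu mstar
              <= prob_high mu m * (potential s k - potential (start_phase T mp m (eps_sched k ^ 2)) (S k)))
        by lra.
      apply overshoot_drift; [lra|].
      pose proof (potential_start_phase mp m k ltac:(lra) ltac:(lra) Hleft).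
      pose proof (phase_potential_ge1 s ltac:(cbn; lra)). lra.
Qed.

Lemma played_bounds s k : sej_inv s k -> 0 <= played s <= 1.
Proof.
  unfold sej_inv, played. pose proof mstar_bounds.
  destruct (s_final s); intros HI; lra.
Qed.

Lemma sej_value_regret n s k : sej_inv s k ->
  INR n * Vstar mu mstar - sej_value mu alpha qhat T n s
    <= potential s k + INR n * ((1 - mu) / INR T).
Proof.
  revert s k. induction n as [|n IH]; intros s k HI.
  - cbn [sej_value INR]. pose proof (potential_nonneg s k HI). lra.
  - cbn [sej_value]. rewrite receiver_ignores_low, S_INR.
    destruct (sej_round_drift s k HI) as [k' [HI' Hdrift]].
    pose proof (IH _ _ HI') as IHhigh. pose proof (IH s k HI) as IHlow.
    pose proof (played_bounds s k HI).
    set (pH := prob_high mu (played s)) in *.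
    set (s' := sej_high T s (act_on (played s))) in *.
    assert (HpH : 0 <= pH <= 1) by (unfold pH, prob_high; split; nra).
    assert (pH * (INR n * Vstar mu mstar - sej_value mu alpha qhat T n s')
            <= pH * (potential s' k' + INR n * ((1 - mu) / INR T)))
      by (apply Rmult_le_compat_l; lra).
    assert ((1 - pH) * (INR n * Vstar mu mstar - sej_value mu alpha qhat T n s)
            <= (1 - pH) * (potential s k + INR n * ((1 - mu) / INR T)))
      by (apply Rmult_le_compat_l; lra).
    lra.
Qed.

Lemma sej_init_exploring : sej_init T = mkS 0 1 (/ 2) 0 0 false.
Proof.
  pose proof INR_T_ge4.
  unfold sej_init, start_phase. destruct (Rlt_dec _ _) as [_|Hn].
  - f_equal. field.
  - exfalso. apply Hn. replace (1 - 0) with (/ 1) by field. apply Rinv_lt_contravar; lra.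
Qed.

Lemma sej_init_inv : sej_inv (sej_init T) 0.
Proof.
  pose proof mstar_bounds. pose proof INR_T_ge4.
  pose proof (ceil_loglog_ge1 (INR T) ltac:(lra)).
  rewrite sej_init_exploring. unfold sej_inv. cbn. repeat split; lra.
Qed.

Lemma sej_init_potential :
  potential (sej_init T) 0 <= phase_weight * (2 + ceil_loglog (INR T)) - 1.
Proof.
  pose proof mstar_bounds. pose proof loss_weight_nonneg.
  rewrite sej_init_exploring. unfold potential, phase_potential, phases_left. cbn.
  destruct (Rle_dec 0 mstar) as [_|]; [|lra].
  pose proof (walk_cost_half (mstar - 0) ltac:(lra)).
  unfold phase_weight. nra.
Qed.

End SEJ.

Theorem propositionF1 (mu alpha qhat mstar : R) (T : nat) :
  0 < mu < 1 -> 0 < alpha <= 1 -> mu < qhat < 1 ->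
  alpha >= (qhat - mu) / (1 - mu) ->
  (1 - alpha) * mu + alpha * (mu / (mu + (1 - mu) * mstar)) = qhat ->
  (4 <= T)%nat ->
  sej_regret mu alpha qhat mstar T
    <= ((1 - mu) / mu + 1) * (2 + IZR (Rceil (log2R (log2R (INR T))))) + 1.
Proof.
  intros Hmu Ha Hq Hal Hdef HT.
  pose proof (sej_value_regret mu alpha qhat mstar T Hmu Ha Hq Hal Hdef HT T _ _
                (sej_init_inv mu alpha qhat mstar T Hmu Ha Hq Hal Hdef HT)) as Hreg.
  pose proof (sej_init_potential mu alpha qhat mstar T Hmu Ha Hq Hal Hdef HT).
  pose proof (INR_T_ge4 T HT).
  replace (INR T * ((1 - mu) / INR T)) with (1 - mu) in Hreg by (field; lra).
  unfold sej_regret. unfold phase_weight, loss_weight, ceil_loglog in *. lra.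
Qed.
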